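(* The set $\mathcal{D}$ of directed-convex polyominoes equals $Av_{\mathfrak{P}}(H,V,D)$, where $H=\begin{bmatrix}1&0&1\end{bmatrix}$, $V=\begin{bmatrix}1\\0\\1\end{bmatrix}$ and $D=\begin{bmatrix}1&1\\0&1\end{bmatrix}$.
   Context: A polyomino is a finite union of unit cells of $\mathbb{Z}\times\mathbb{Z}$ that is connected via edge adjacency, up to translation, identified with the binary matrix of its minimal bounding rectangle (entry $1$ iff the corresponding unit square is a cell; rows numbered bottom to top, and in displayed matrices the first written row is the top row). A matrix is a submatrix of another if obtained by deleting rows and/or columns; $Av_{\mathfrak{P}}(\mathcal{M})$ is the set of polyominoes with no submatrix in $\mathcal{M}$. A polyomino is convex if each of its rows and each of its columns is connected. An (internal) path of a polyomino is a sequence of distinct cells $(c_1,\dots,c_n)$ of the polyomino in which consecutive cells share an edge; the pair $(c_i,c_{i+1})$ is a north, south, east or west step according to the position of $c_{i+1}$ relative to $c_i$. A polyomino is directed if there is a cell (the source) from which every cell can be reached by a path using only north and east steps. A directed-convex polyomino is a polyomino that is both directed and convex. *)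

From mathcomp Require Import all_boot all_algebra.
Set Implicit Arguments. Unset Strict Implicit. Unset Printing Implicit Defensive.

(* A polyomino is represented (canonically, i.e. up to translation) by the
   boolean matrix P : 'M[bool]_(m, n) of its minimal bounding rectangle.
   Convention: row index i : 'I_m is the y-coordinate, numbered BOTTOM to TOP
   (row 0 is the bottom row); column index j : 'I_n is the x-coordinate,
   numbered left to right. *)

Definition cell (m n : nat) := ('I_m * 'I_n)%type.

Definition in_poly m n (P : 'M[bool]_(m, n)) (c : cell m n) : bool := P c.1 c.2.

Definition north_step m n (c c' : cell m n) : bool :=
  (c'.2 == c.2) && (c'.1 == (c.1).+1 :> nat).
Definition south_step m n (c c' : cell m n) : bool := north_step c' c.
Definition east_step m n (c c' : cell m n) : bool :=
  (c'.1 == c.1) && (c'.2 == (c.2).+1 :> nat).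
Definition west_step m n (c c' : cell m n) : bool := east_step c' c.

Definition adjacent m n (c c' : cell m n) : bool :=
  [|| north_step c c', south_step c c', east_step c c' | west_step c c'].

Definition internal_path m n (P : 'M[bool]_(m, n)) (step : rel (cell m n))
    (c c' : cell m n) (s : seq (cell m n)) : bool :=
  [&& uniq (c :: s), all (in_poly P) (c :: s), path step c s & last c s == c'].

Definition poly_connected m n (P : 'M[bool]_(m, n)) : Prop :=
  forall c c' : cell m n, in_poly P c -> in_poly P c' ->
    exists s, internal_path P (@adjacent m n) c c' s.

(* P is the matrix of a polyomino: nonempty, connected, and P is the minimal
   bounding rectangle (every row and every column contains a cell). *)
Definition is_polyomino m n (P : 'M[bool]_(m, n)) : Prop :=
  [/\ exists c : cell m n, in_poly P c,
      forall i : 'I_m, exists j : 'I_n, P i j,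
      forall j : 'I_n, exists i : 'I_m, P i j
    & poly_connected P].

Definition convex m n (P : 'M[bool]_(m, n)) : Prop :=
  (forall (i : 'I_m) (j1 j j2 : 'I_n),
      (j1 <= j <= j2)%N -> P i j1 -> P i j2 -> P i j) /\
  (forall (j : 'I_n) (i1 i i2 : 'I_m),
      (i1 <= i <= i2)%N -> P i1 j -> P i2 j -> P i j).

Definition north_or_east m n : rel (cell m n) :=
  fun c c' => north_step c c' || east_step c c'.

Definition directed m n (P : 'M[bool]_(m, n)) : Prop :=
  exists2 src : cell m n, in_poly P src &
    forall c : cell m n, in_poly P c ->
      exists s, internal_path P (@north_or_east m n) src c s.

Definition directed_convex m n (P : 'M[bool]_(m, n)) : Prop :=
  directed P /\ convex P.

Definition submatrix k l m n (A : 'M[bool]_(k, l)) (P : 'M[bool]_(m, n)) : Prop :=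
  exists (f : 'I_k -> 'I_m) (g : 'I_l -> 'I_n),
    [/\ forall a b : 'I_k, (a < b)%N -> (f a < f b)%N,
        forall a b : 'I_l, (a < b)%N -> (g a < g b)%N
      & forall a b, P (f a) (g b) = A a b].

(* Patterns (row 0 = bottom row):
   H = [1 0 1],  V = [1;0;1] (column),  D = displayed [[1,1],[0,1]], i.e.
   top row (index 1) = 1 1, bottom row (index 0) = 0 1. *)
Definition patH : 'M[bool]_(1, 3) := \matrix_(i < 1, j < 3) (j != 1%N :> nat).
Definition patV : 'M[bool]_(3, 1) := \matrix_(i < 3, j < 1) (i != 1%N :> nat).
Definition patD : 'M[bool]_(2, 2) :=
  \matrix_(i < 2, j < 2) ((i == 1%N :> nat) || (j == 1%N :> nat)).

Definition avoids_HVD m n (P : 'M[bool]_(m, n)) : Prop :=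
  ~ submatrix patH P /\ ~ submatrix patV P /\ ~ submatrix patD P.

From mathcomp Require Import all_boot all_algebra.
From mathcomp Require Import zify.
Set Implicit Arguments. Unset Strict Implicit. Unset Printing Implicit Defensive.

(* Avoiding H and V is row and column convexity; avoiding D says that the
   bottom-left corner of a rectangle lies in P as soon as its three other
   corners do.  If P is directed and D occurs in rows r0 < r1 and columns
   c0 < c1, the north-east path to (r0, c1) puts the source weakly below row
   r0, so the north-east path to (r1, c0) leaves row r0 by a north step at a
   column at most c0; row convexity of row r0 then fills the corner (r0, c0).
   Conversely, let c be a cell of a convex polyomino avoiding D with no south
   or west neighbour in P.  If c were not in the bottom row, an adjacency path
   from c to the row below would leave the row of c downwards at some cell;
   row convexity (if that cell is west of c) or D-avoidance (if it is east of
   c) would yield a west or south neighbour of c.  So c is in the bottom row,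
   and symmetrically in the leftmost column.  Every cell is reached by a
   north-east path from such a minimal cell, hence from (0, 0). *)

Lemma path_crossing (T : eqType) (e : rel T) (p : pred T) x s :
  path e x s -> p x -> ~~ p (last x s) ->
  exists a b, [/\ a \in x :: s, b \in s, p a, ~~ p b & e a b].
Proof.
elim: s x => [|y s IH] x /=; first by move=> _ ->.
case/andP=> exy pys px npl; case: (boolP (p y)) => py; last first.
  by exists x, y; rewrite !inE !eqxx.
have [a [b [a_in b_in pa npb eab]]] := IH y pys py npl.
by exists a, b; split; rewrite // inE ?a_in ?b_in orbT.
Qed.

Section Steps.

Variables m n : nat.
Implicit Types a b c x y : cell m n.

Lemma north_or_east_coord a b : north_or_east a b ->
  (b.1 = a.1.+1 :> nat /\ b.2 = a.2 :> nat) \/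
  (b.1 = a.1 :> nat /\ b.2 = a.2.+1 :> nat).
Proof.
rewrite /north_or_east /north_step /east_step.
by case/orP=> /andP[/eqP/(congr1 val) /= E1 /eqP E2]; lia.
Qed.

Lemma adjacent_north_or_east a b :
  adjacent a b = north_or_east a b || north_or_east b a.
Proof.
rewrite /adjacent /north_or_east /south_step /west_step.
by case: (north_step a b); case: (north_step b a); case: (east_step a b).
Qed.

Lemma north_or_east_path_last x s y :
  path (@north_or_east m n) x s -> y \in x :: s ->
  (y.1 <= (last x s).1)%N && (y.2 <= (last x s).2)%N.
Proof.
elim: s x y => [|z s IH] x y /=; first by rewrite inE => _ /eqP ->; rewrite !leqnn.
case/andP=> /north_or_east_coord exz pzs; rewrite inE => /predU1P[->|]; last exact: IH.
have /andP[le1 le2] := IH z z pzs (mem_head _ _).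
by apply/andP; split; case: exz; lia.
Qed.

Lemma north_or_east_path_uniq x s :
  path (@north_or_east m n) x s -> uniq (x :: s).
Proof.
pose lt_sum := fun a b : cell m n => (a.1 + a.2 < b.1 + b.2)%N.
move=> pxs; apply: (@sorted_uniq _ lt_sum).
- by move=> ? ? ?; exact: ltn_trans.
- by move=> ?; exact: ltnn.
by apply: sub_path pxs => a b /north_or_east_coord; rewrite /lt_sum; lia.
Qed.

Lemma north_or_east_path_from_minimal (P : 'M[bool]_(m, n)) c : in_poly P c ->
  exists r s, [/\ in_poly P r, forall c', in_poly P c' -> ~~ north_or_east c' r,
                  path (@north_or_east m n) r s, last r s = c & all (in_poly P) s].
Proof.
have [k] := ubnP (c.1 + c.2)%N; elim: k c => // k IH c /ltnSE le_ck Pc.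
case: (pickP [pred c' : cell m n | in_poly P c' && north_or_east c' c]).
  move=> [i j] /andP[Pij ijc].
  have lt_ijk : (i + j < k)%N by case: (north_or_east_coord ijc); rewrite /=; lia.
  have [r [s [Pr minr prs lrs Ps]]] := IH (i, j) lt_ijk Pij.
  exists r, (rcons s c); split=> //.
  - by rewrite rcons_path prs lrs.
  - by rewrite last_rcons.
  - by rewrite all_rcons Pc.
move=> none; exists c, [::]; split=> // c' Pc'.
by move: (none c'); rewrite /= Pc' /= => ->.
Qed.

End Steps.

Definition row_convex m n (P : 'M[bool]_(m, n)) : Prop :=
  forall (i : 'I_m) (j1 j j2 : 'I_n), (j1 <= j <= j2)%N -> P i j1 -> P i j2 -> P i j.

Definition corner_closed m n (P : 'M[bool]_(m, n)) : Prop :=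
  forall (r0 r1 : 'I_m) (c0 c1 : 'I_n), (r0 < r1)%N -> (c0 < c1)%N ->
    P r1 c0 -> P r1 c1 -> P r0 c1 -> P r0 c0.

Local Open Scope ring_scope.

(* Transposition exchanges north and east steps, so every column statement
   below is the row statement for P^T. *)
Definition cell_tr m n (c : cell m n) : cell n m := (c.2, c.1).

Lemma cell_trK m n : cancel (@cell_tr m n) (@cell_tr n m).
Proof. by case. Qed.

Lemma in_poly_tr m n (P : 'M[bool]_(m, n)) c : in_poly P^T (cell_tr c) = in_poly P c.
Proof. by rewrite /in_poly mxE. Qed.

Lemma north_or_east_tr m n (a b : cell m n) :
  north_or_east (cell_tr a) (cell_tr b) = north_or_east a b.
Proof. by rewrite /north_or_east orbC. Qed.

Lemma adjacent_tr m n (a b : cell m n) : adjacent (cell_tr a) (cell_tr b) = adjacent a b.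
Proof. by rewrite !adjacent_north_or_east !north_or_east_tr. Qed.

Lemma poly_connected_tr m n (P : 'M[bool]_(m, n)) : poly_connected P -> poly_connected P^T.
Proof.
move=> conn c c'; rewrite -[c]cell_trK -[c']cell_trK !in_poly_tr => Pc Pc'.
have [s /and4P[us Ps ps /eqP ls]] := conn _ _ Pc Pc'.
exists (map (@cell_tr m n) s); apply/and4P; split.
- by rewrite -map_cons (map_inj_uniq (can_inj (@cell_trK m n))).
- by rewrite -map_cons all_map (eq_all (in_poly_tr P)).
- by rewrite path_map (eq_path (@adjacent_tr m n)).
- by rewrite last_map ls.
Qed.

Lemma convex_row_convex m n (P : 'M[bool]_(m, n)) :
  convex P <-> row_convex P /\ row_convex P^T.
Proof.
split=> -[rc cc]; split=> // j i1 i i2.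
- by rewrite !mxE; exact: cc.
- by move=> le_i P1 P2; have := cc j i1 i i2 le_i; rewrite !mxE; exact.
Qed.

Lemma corner_closed_tr m n (P : 'M[bool]_(m, n)) : corner_closed P -> corner_closed P^T.
Proof.
move=> cc r0 r1 c0 c1 lt_r lt_c; rewrite !mxE => P01 P11 P10.
exact: cc lt_c lt_r P10 P11 P01.
Qed.

Lemma submatrix_tr k l m n (A : 'M[bool]_(k, l)) (P : 'M[bool]_(m, n)) :
  submatrix A P -> submatrix A^T P^T.
Proof. by case=> f [g [mf mg fg]]; exists g, f; split=> // a b; rewrite !mxE. Qed.

Lemma patV_tr : patV = patH^T.
Proof. by apply/matrixP => i j; rewrite !mxE. Qed.

Lemma row_convex_patH m n (P : 'M[bool]_(m, n)) : row_convex P <-> ~ submatrix patH P.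
Proof.
split=> [rc [f [g [_ mg fg]]] | noH i j1 j j2 /andP[le1 le2] P1 P2].
  pose i0 := @Ordinal 3 0 isT; pose i1 := @Ordinal 3 1 isT; pose i2 := @Ordinal 3 2 isT.
  have := rc (f ord0) (g i0) (g i1) (g i2).
  by rewrite !fg !mxE (ltnW (mg i0 i1 isT)) (ltnW (mg i1 i2 isT)) => /(_ isT isT isT).
apply/negPn/negP => Pj; apply: noH.
have lt1 : (j1 < j)%N by rewrite ltn_neqAle le1 andbT; apply: (contraNneq _ Pj) => /val_inj <-.
have lt2 : (j < j2)%N by rewrite ltn_neqAle le2 andbT; apply: (contraNneq _ Pj) => /val_inj ->.
exists (fun _ => i), (fun b : 'I_3 => if val b == 0 then j1 else if val b == 1 then j else j2).
split.
- by move=> [[|a] ?] [[|b] ?].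
- by move=> [[|[|[|a]]] ?] [[|[|[|b]]] ?] //=; lia.
- by move=> a [[|[|[|b]]] ?]; rewrite mxE //= (negbTE Pj).
Qed.

Lemma col_convex_patV m n (P : 'M[bool]_(m, n)) : row_convex P^T <-> ~ submatrix patV P.
Proof.
rewrite patV_tr; split=> [/row_convex_patH noH /submatrix_tr | noV].
  by rewrite trmxK.
by apply/row_convex_patH => /submatrix_tr; rewrite !trmxK.
Qed.

Lemma corner_closed_patD m n (P : 'M[bool]_(m, n)) : corner_closed P <-> ~ submatrix patD P.
Proof.
split=> [cc [f [g [mf mg fg]]] | noD r0 r1 c0 c1 lt_r lt_c P10 P11 P01].
  have := cc (f ord0) (f ord_max) (g ord0) (g ord_max).
  by rewrite !fg !mxE (mf ord0 ord_max isT) (mg ord0 ord_max isT) => /(_ isT isT isT isT isT).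
apply/negPn/negP => P00; apply: noD.
exists (fun a : 'I_2 => if val a == 0 then r0 else r1),
       (fun b : 'I_2 => if val b == 0 then c0 else c1).
split.
- by move=> [[|[|a]] ?] [[|[|b]] ?].
- by move=> [[|[|a]] ?] [[|[|b]] ?].
- by move=> [[|[|a]] ?] [[|[|b]] ?]; rewrite mxE //= (negbTE P00).
Qed.

Lemma directed_corner_closed m n (P : 'M[bool]_(m, n)) :
  directed P -> row_convex P -> corner_closed P.
Proof.
move=> [src Psrc reach] rc r0 r1 c0 c1 lt_r lt_c P10 P11 P01.
have [s /and4P[_ _ ps /eqP ls]] := reach (r0, c1) P01.
have /andP[src_r0 _] := north_or_east_path_last ps (mem_head src s).
rewrite ls /= in src_r0.
have [s' /and4P[_ Ps' ps' /eqP ls']] := reach (r1, c0) P10.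
have last_r0 : ~~ ((last src s').1 <= r0)%N by rewrite ls' /= -ltnNge.
have [[ai aj] [[bi bj] [a_in _ /= ai_r0 /= bi_r0 ab]]] :=
  path_crossing (p := fun x : cell m n => (x.1 <= r0)%N) ps' src_r0 last_r0.
have /andP[_ aj_c0] := north_or_east_path_last ps' a_in; rewrite ls' /= in aj_c0.
have ai_eq : ai = r0 by apply: ord_inj; case: (north_or_east_coord ab) => /=; lia.
apply: (rc r0 aj c0 c1) => //; first by rewrite aj_c0 ltnW.
by rewrite -ai_eq; exact: (allP Ps' _ a_in).
Qed.

Lemma minimal_cell_bottom m n (P : 'M[bool]_(m, n)) c :
  (forall i : 'I_m, exists j, P i j) -> poly_connected P ->
  row_convex P -> corner_closed P -> in_poly P c ->
  (forall c', in_poly P c' -> ~~ north_or_east c' c) -> c.1 = 0%N :> nat.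
Proof.
case: c => i j rows conn rc cc Pij minij /=.
apply/eqP; rewrite -leqn0 leqNgt; apply/negP => i_gt0.
have lt_i'm : (i.-1 < m)%N by have := ltn_ord i; lia.
have [k Pk] := rows (Ordinal lt_i'm).
have [s /and4P[_ Ps ps /eqP ls]] := conn (i, j) (Ordinal lt_i'm, k) Pij Pk.
have last_i : ~~ (i <= (last (i, j) s).1)%N by rewrite ls /= -ltnNge ltn_predL.
have [[ai aj] [[bi bj] [a_in b_in /= i_ai /= i_bi]]] :=
  path_crossing (p := fun x : cell m n => (i <= x.1)%N) ps (leqnn i) last_i.
rewrite adjacent_north_or_east => ab.
have Pa : P ai aj by exact: (allP Ps _ a_in).
have Pb : P bi bj by apply: (allP Ps (bi, bj)); rewrite inE b_in orbT.
have [ai_eq bi_eq bj_eq] : [/\ ai = i, bi.+1 = i :> nat & bj = aj].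
  by case/orP: ab => /north_or_east_coord /= ab; split; try apply: ord_inj; lia.
have [[j' j'_eq Pij'] | Pbj] :
    (exists2 j' : 'I_n, j'.+1 = j :> nat & P i j') \/ P bi j.
  case: (ltngtP aj j) => [lt_aj | lt_ja | aj_eq].
  - have lt_j'n : (j.-1 < n)%N by have := ltn_ord j; lia.
    left; exists (Ordinal lt_j'n); first by rewrite /=; lia.
    by apply: (rc i aj _ j) => //=; [lia | rewrite -ai_eq].
  - by right; apply: (cc bi i j aj) => //; [lia | rewrite -ai_eq | rewrite -bj_eq].
  - by right; rewrite -(val_inj aj_eq) -bj_eq.
- have := minij (i, j') Pij'.
  by rewrite /north_or_east /east_step /= eqxx j'_eq eqxx orbT.
- have := minij (bi, j) Pbj.
  by rewrite /north_or_east /north_step /= eqxx bi_eq eqxx.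
Qed.

Lemma minimal_cell_left m n (P : 'M[bool]_(m, n)) c :
  (forall j : 'I_n, exists i, P i j) -> poly_connected P ->
  row_convex P^T -> corner_closed P -> in_poly P c ->
  (forall c', in_poly P c' -> ~~ north_or_east c' c) -> c.2 = 0%N :> nat.
Proof.
move=> cols conn rcT cc Pc minc.
apply: (@minimal_cell_bottom _ _ P^T (cell_tr c)) => //.
- by move=> j; have [i Pij] := cols j; exists i; rewrite mxE.
- exact: poly_connected_tr.
- exact: corner_closed_tr.
- by rewrite in_poly_tr.
- by move=> c'; rewrite -[c']cell_trK in_poly_tr north_or_east_tr; exact: minc.
Qed.

Lemma corner_closed_directed m n (P : 'M[bool]_(m, n)) :
  is_polyomino P -> convex P -> corner_closed P -> directed P.
Proof.
case=> -[c0 Pc0] rows cols conn /convex_row_convex[rc rcT] cc.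
have corner r : in_poly P r -> (forall c', in_poly P c' -> ~~ north_or_east c' r) ->
    r.1 = 0%N :> nat /\ r.2 = 0%N :> nat.
  by move=> Pr minr; split; [apply: minimal_cell_bottom | apply: minimal_cell_left].
have [src [s0 [Psrc minsrc _ _ _]]] := north_or_east_path_from_minimal Pc0.
exists src => // c Pc.
have [r [s [Pr minr prs lrs Ps]]] := north_or_east_path_from_minimal Pc.
have -> : src = r.
  have [[src1 src2] [r1 r2]] := (corner _ Psrc minsrc, corner _ Pr minr).
  by apply: injective_projections; apply: ord_inj; lia.
by exists s; rewrite /internal_path north_or_east_path_uniq //= Pr Ps prs lrs eqxx.
Qed.

Theorem proposition13 (m n : nat) (P : 'M[bool]_(m, n)) :
  is_polyomino P -> (directed_convex P <-> avoids_HVD P).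
Proof.
move=> polyP; split.
- case=> dirP /convex_row_convex[rc rcT].
  split; first exact/row_convex_patH.
  split; first exact/col_convex_patV.
  exact/corner_closed_patD/directed_corner_closed.
- case=> noH [noV noD].
  have convP : convex P.
    by apply/convex_row_convex; split; [exact/row_convex_patH | exact/col_convex_patV].
  split=> //; apply: corner_closed_directed => //; exact/corner_closed_patD.
Qed.
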